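(* Up to isomorphism, the specific sets of $S$-probabilities (for arbitrary sets $S$) are exactly the bounded posets with an antitone involution that have a full and uniform set of specific states. That is: every specific set of $S$-probabilities, with the pointwise order, $p\mapsto 1-p$, $0$ and $1$, is a bounded poset with an antitone involution having a full and uniform set of specific states; and conversely every bounded poset with an antitone involution having a full and uniform set of specific states is isomorphic to a specific set of $S$-probabilities for some set $S$.
   Context: An $S$-probability is a function $p\colon S\to[0,1]$; sets $P$ of them are ordered pointwise, $0,1$ are constant functions, sums are pointwise. In a bounded poset $\mathbf P=(P,\le,{}',0,1)$ with an antitone involution $'$ (i.e. $p\le q\Rightarrow q'\le p'$ and $p''=p$), $p\wedge q=0$ means the only lower bound of $p,q$ in $P$ is $0$. A set $P$ of $S$-probabilities is specific if (1) $0,1\in P$; (2) $p\in P\Rightarrow 1-p\in P$; (3) $p,q\in P$, $p\wedge q=0\Rightarrow p+q\in P$. A specific state on $\mathbf P$ is a map $s\colon P\to[0,1]$ with (S1) $s(0)=0$, $s(1)=1$; (S2) $s(p')=1-s(p)$; (S3) $p\le q\Rightarrow s(p)\le s(q)$; (S4) if $p\wedge q=0$ then there is $r\in P$ with $r\ge p$, $r\ge q$ and $s(r)=s(p)+s(q)$. A set $T$ of specific states is full if $s(p)\le s(q)$ for all $s\in T$ implies $p\le q$, and uniform if for every disjoint pair $p,q$ a single $r$ witnesses (S4) simultaneously for all $s\in T$. Isomorphism means an order isomorphism preserving $'$, $0$ and $1$. *)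

From Stdlib Require Export Reals.
Open Scope R_scope.

Definition is_bpai {T : Type} (le : T -> T -> Prop) (c : T -> T) (z o : T) : Prop :=
  (forall a, le a a) /\
  (forall a b, le a b -> le b a -> a = b) /\
  (forall a b d, le a b -> le b d -> le a d) /\
  (forall a, le z a /\ le a o) /\
  (forall a b, le a b -> le (c b) (c a)) /\
  (forall a, c (c a) = a).

(** p /\ q = 0 : the only lower bound of p and q is 0. *)
Definition disj {T : Type} (le : T -> T -> Prop) (z : T) (p q : T) : Prop :=
  forall r, le r p -> le r q -> r = z.

Definition is_specific_state {T : Type} (le : T -> T -> Prop) (c : T -> T) (z o : T)
  (s : T -> R) : Prop :=
  (forall p, 0 <= s p <= 1) /\
  s z = 0 /\ s o = 1 /\
  (forall p, s (c p) = 1 - s p) /\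
  (forall p q, le p q -> s p <= s q) /\
  (forall p q, disj le z p q -> exists r, le p r /\ le q r /\ s r = s p + s q).

Definition full_states {T : Type} (le : T -> T -> Prop) (St : (T -> R) -> Prop) : Prop :=
  forall p q, (forall s, St s -> s p <= s q) -> le p q.

Definition uniform_states {T : Type} (le : T -> T -> Prop) (z : T)
  (St : (T -> R) -> Prop) : Prop :=
  forall p q, disj le z p q ->
    exists r, le p r /\ le q r /\ forall s, St s -> s r = s p + s q.

Definition has_full_uniform_specific_states {T : Type} (le : T -> T -> Prop)
  (c : T -> T) (z o : T) : Prop :=
  exists St : (T -> R) -> Prop,
    (forall s, St s -> is_specific_state le c z o s) /\
    full_states le St /\ uniform_states le z St.

Definition pw_le {S : Type} (p q : S -> R) : Prop := forall x, p x <= q x.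

Record specific_set (S : Type) (P : (S -> R) -> Prop) : Prop := {
  sp_prob : forall p, P p -> forall x, 0 <= p x <= 1;
  sp_zero : P (fun _ => 0);
  sp_one : P (fun _ => 1);
  sp_compl : forall p, P p -> P (fun x => 1 - p x);
  sp_sum : forall p q, P p -> P q ->
    (forall r, P r -> pw_le r p -> pw_le r q -> r = (fun _ => 0)) ->
    P (fun x => p x + q x) }.

Definition sp_car (S : Type) (P : (S -> R) -> Prop) : Type := {p : S -> R | P p}.

Definition sp_le {S : Type} {P : (S -> R) -> Prop} (a b : sp_car S P) : Prop :=
  pw_le (proj1_sig a) (proj1_sig b).

Definition sp_c {S : Type} {P : (S -> R) -> Prop} (H : specific_set S P)
  (a : sp_car S P) : sp_car S P :=
  exist _ (fun x => 1 - proj1_sig a x) (sp_compl S P H _ (proj2_sig a)).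

Definition sp_z {S : Type} {P : (S -> R) -> Prop} (H : specific_set S P) : sp_car S P :=
  exist _ (fun _ => 0) (sp_zero S P H).

Definition sp_o {S : Type} {P : (S -> R) -> Prop} (H : specific_set S P) : sp_car S P :=
  exist _ (fun _ => 1) (sp_one S P H).

(** The evaluations [p |-> p x] at the points [x] of [S] are specific states of
    a specific set of [S]-probabilities; they are full because the order is
    pointwise, and uniform because disjoint [p], [q] have their sum [p + q] in
    the set. Conversely, given a full and uniform set [St] of specific states,
    take [S := St] and represent [a] by [s |-> s a]: fullness makes this an
    order embedding, the state axioms turn [c], [0], [1] into [1 - _], [0], [1],
    and uniformity supplies, for disjoint [a], [b], an [r] represented by the
    sum of the representations of [a] and [b]. *)

From Stdlib Require Import Reals Lra ProofIrrelevance FunctionalExtensionality.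

Lemma sp_car_ext {S : Type} {P : (S -> R) -> Prop} (a b : sp_car S P) :
  (forall x, proj1_sig a x = proj1_sig b x) -> a = b.
Proof.
  intro hab; apply eq_sig_hprop.
  - intros; apply proof_irrelevance.
  - now apply functional_extensionality.
Qed.

Section SpecificSetStates.

Variables (S : Type) (P : (S -> R) -> Prop).
Hypothesis H : specific_set S P.

Definition sp_eval (x : S) (a : sp_car S P) : R := proj1_sig a x.

Definition sp_evals (s : sp_car S P -> R) : Prop := exists x, s = sp_eval x.

Lemma sp_eval_bounds (x : S) (a : sp_car S P) : 0 <= sp_eval x a <= 1.
Proof. exact (sp_prob S P H _ (proj2_sig a) x). Qed.

Lemma sp_bpai : is_bpai (@sp_le S P) (sp_c H) (sp_z H) (sp_o H).
Proof.
  unfold is_bpai, sp_le, pw_le; repeat split; simpl.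
  - intros; lra.
  - intros a b hab hba; apply sp_car_ext; intro x.
    specialize (hab x); specialize (hba x); lra.
  - intros a b d hab hbd x; specialize (hab x); specialize (hbd x); lra.
  - intro x; apply (sp_eval_bounds x a).
  - intro x; apply (sp_eval_bounds x a).
  - intros a b hab x; specialize (hab x); lra.
  - intro a; apply sp_car_ext; simpl; intro; lra.
Qed.

Lemma sp_disj_sum_in (p q : sp_car S P) :
  disj (@sp_le S P) (sp_z H) p q -> P (fun x => proj1_sig p x + proj1_sig q x).
Proof.
  intro hpq; apply (sp_sum S P H _ _ (proj2_sig p) (proj2_sig q)).
  intros r hr hrp hrq.
  exact (f_equal (@proj1_sig _ _) (hpq (exist _ r hr) hrp hrq)).
Qed.

Lemma sp_evals_uniform : uniform_states (@sp_le S P) (sp_z H) sp_evals.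
Proof.
  intros p q hpq.
  exists (exist _ _ (sp_disj_sum_in p q hpq)).
  unfold sp_le, pw_le; simpl; split; [|split].
  - intro x; pose proof (sp_eval_bounds x q); unfold sp_eval in *; lra.
  - intro x; pose proof (sp_eval_bounds x p); unfold sp_eval in *; lra.
  - now intros s [x ->].
Qed.

Lemma sp_evals_full : full_states (@sp_le S P) sp_evals.
Proof. intros p q hpq x; apply (hpq (sp_eval x)); now exists x. Qed.

Lemma sp_eval_specific (x : S) :
  is_specific_state (@sp_le S P) (sp_c H) (sp_z H) (sp_o H) (sp_eval x).
Proof.
  unfold is_specific_state, sp_eval; simpl; repeat split; try lra.
  - apply (sp_eval_bounds x p).
  - apply (sp_eval_bounds x p).
  - intros p q hpq; apply hpq.
  - intros p q hpq.
    destruct (sp_evals_uniform p q hpq) as [r [hpr [hqr hr]]].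
    exists r; split; [|split]; auto.
    now apply (hr (sp_eval x)); exists x.
Qed.

Lemma sp_has_full_uniform_states :
  has_full_uniform_specific_states (@sp_le S P) (sp_c H) (sp_z H) (sp_o H).
Proof.
  exists sp_evals; split; [|split].
  - intros s [x ->]; apply sp_eval_specific.
  - exact sp_evals_full.
  - exact sp_evals_uniform.
Qed.

End SpecificSetStates.

Section StateRepresentation.

Variables (T : Type) (le : T -> T -> Prop) (c : T -> T) (z o : T).
Hypothesis Hbpai : is_bpai le c z o.
Variable St : (T -> R) -> Prop.
Hypothesis Hspecific : forall s, St s -> is_specific_state le c z o s.
Hypothesis Hfull : full_states le St.
Hypothesis Huniform : uniform_states le z St.

Definition state_space : Type := {s : T -> R | St s}.

Definition state_repr (a : T) : state_space -> R := fun s => proj1_sig s a.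

Definition state_reprs (p : state_space -> R) : Prop := exists a, p = state_repr a.

Lemma state_repr_le_iff (a b : T) : le a b <-> pw_le (state_repr a) (state_repr b).
Proof.
  split.
  - intros hab [s hs]; apply (Hspecific s hs), hab.
  - intro hab; apply Hfull; intros s hs; apply (hab (exist _ s hs)).
Qed.

Lemma state_repr_injective (a b : T) : state_repr a = state_repr b -> a = b.
Proof.
  intro hab; destruct Hbpai as [_ [Hantisym _]].
  apply Hantisym; apply state_repr_le_iff; rewrite hab; intro; lra.
Qed.

Lemma state_repr_compl (a : T) : state_repr (c a) = fun s => 1 - state_repr a s.
Proof. apply functional_extensionality; intros [s hs]; apply (Hspecific s hs). Qed.

Lemma state_repr_zero : state_repr z = fun _ => 0.
Proof. apply functional_extensionality; intros [s hs]; apply (Hspecific s hs). Qed.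

Lemma state_repr_one : state_repr o = fun _ => 1.
Proof. apply functional_extensionality; intros [s hs]; apply (Hspecific s hs). Qed.

Lemma state_repr_disj (a b : T) :
  (forall r, state_reprs r -> pw_le r (state_repr a) -> pw_le r (state_repr b) ->
     r = fun _ => 0) ->
  disj le z a b.
Proof.
  intros hab r hra hrb.
  destruct Hbpai as [_ [Hantisym [_ [Hbounds _]]]].
  apply Hantisym; [|apply Hbounds].
  apply state_repr_le_iff; rewrite state_repr_zero.
  rewrite (hab (state_repr r)); [intro; lra | now exists r | |];
    now apply state_repr_le_iff.
Qed.

Lemma state_reprs_specific : specific_set state_space state_reprs.
Proof.
  constructor.
  - intros p [a ->] [s hs]; apply (Hspecific s hs).
  - exists z; symmetry; apply state_repr_zero.
  - exists o; symmetry; apply state_repr_one.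
  - intros p [a ->]; exists (c a); symmetry; apply state_repr_compl.
  - intros p q [a ->] [b ->] hab.
    destruct (Huniform a b (state_repr_disj a b hab)) as [r [_ [_ hr]]].
    exists r; apply functional_extensionality; intros [s hs].
    symmetry; apply (hr s hs).
Qed.

Definition state_embed (a : T) : sp_car state_space state_reprs :=
  exist _ (state_repr a) (ex_intro _ a eq_refl).

Lemma state_embed_surjective (y : sp_car state_space state_reprs) :
  exists a, state_embed a = y.
Proof. destruct y as [p [a ->]]; now exists a. Qed.

Lemma state_embed_iso (HP : specific_set state_space state_reprs) :
  (forall a b, state_embed a = state_embed b -> a = b) /\
  (forall y, exists a, state_embed a = y) /\
  (forall a b, le a b <-> sp_le (state_embed a) (state_embed b)) /\
  (forall a, state_embed (c a) = sp_c HP (state_embed a)) /\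
  state_embed z = sp_z HP /\ state_embed o = sp_o HP.
Proof.
  split; [|split; [|split; [|split; [|split]]]].
  - intros a b hab; apply state_repr_injective.
    exact (f_equal (@proj1_sig _ _) hab).
  - exact state_embed_surjective.
  - exact state_repr_le_iff.
  - intro a; apply sp_car_ext; intro s; simpl; now rewrite state_repr_compl.
  - apply sp_car_ext; intro s; simpl; now rewrite state_repr_zero.
  - apply sp_car_ext; intro s; simpl; now rewrite state_repr_one.
Qed.

End StateRepresentation.

Theorem theorem4p2 :
  (forall (S : Type) (P : (S -> R) -> Prop) (H : specific_set S P),
      is_bpai (@sp_le S P) (sp_c H) (sp_z H) (sp_o H) /\
      has_full_uniform_specific_states (@sp_le S P) (sp_c H) (sp_z H) (sp_o H)) /\
  (forall (T : Type) (le : T -> T -> Prop) (c : T -> T) (z o : T),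
      is_bpai le c z o ->
      has_full_uniform_specific_states le c z o ->
      exists (S : Type) (P : (S -> R) -> Prop) (H : specific_set S P)
             (f : T -> sp_car S P),
        (forall a b, f a = f b -> a = b) /\
        (forall y, exists a, f a = y) /\
        (forall a b, le a b <-> sp_le (f a) (f b)) /\
        (forall a, f (c a) = sp_c H (f a)) /\
        f z = sp_z H /\ f o = sp_o H).
Proof.
  split.
  - intros S P H; split; [apply sp_bpai | apply sp_has_full_uniform_states].
  - intros T le c z o Hbpai [St [Hspecific [Hfull Huniform]]].
    exists (state_space T St), (state_reprs T St),
      (state_reprs_specific T le c z o Hbpai St Hspecific Hfull Huniform),
      (state_embed T St).
    now apply state_embed_iso.
Qed.
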